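(* Let $\mathcal{S}_m$ be the set of pairs $(R,\theta)$ with $R\in\mathbb{R}^{m\times m}$, $\theta\in\mathbb{R}^m$, $R=R'=R^2$ and $R\theta=0$. Define the loss $L((R_1,\theta_1),(R_2,\theta_2))=\|R_1-R_2\|^2+\|\theta_1-\theta_2\|^2$, with $\|A\|^2=\mathrm{Tr}(AA')$. Let $P_n$ be a probability distribution on $\mathcal{S}_m$ (the posterior) under which $\|\theta_2\|^2$ is integrable, and let $\bar R$ and $\bar\theta$ be the means of $R_2$ and $\theta_2$ under $P_n$. Let $2\bar R-\bar\theta\bar\theta'=\sum_{j=1}^m\lambda_jU_jU_j'$ with $\lambda_1\ge\dots\ge\lambda_m$ and $U_1,\dots,U_m$ orthonormal be a singular value (spectral) decomposition. Define $f(R,\theta)=\int L((R,\theta),(R_2,\theta_2))\,dP_n(R_2,\theta_2)$ for $(R,\theta)\in\mathcal{S}_m$. Then $f$ is minimized over $\mathcal{S}_m$ by $R=\sum_{j=1}^kU_jU_j'$ and $\theta=(I-R)\bar\theta$, where $k\in\{0,1,\dots,m\}$ minimizes $k-\sum_{j=1}^k\lambda_j$. The minimizer is unique if and only if there is a unique minimizing $k$ and $\lambda_k>\lambda_{k+1}$ for that $k$.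
   Context: $\mathcal{S}_m$ parametrizes affine subspaces of $\mathbb{R}^m$: $R$ is the projection matrix of the parallel linear subspace and $\theta$ is the projection of the origin onto the affine subspace. *)

From HB Require Import structures.
From mathcomp Require Import all_boot all_order all_algebra.
From mathcomp Require Import all_classical all_reals all_analysis.
Set Implicit Arguments. Unset Strict Implicit. Unset Printing Implicit Defensive.
Import Order.TTheory GRing.Theory Num.Theory.
Import numFieldNormedType.Exports.
Local Open Scope ring_scope.

Definition frob2 (R : realType) (p q : nat) (A : 'M[R]_(p, q)) : R :=
  \tr (A *m A^T).

Definition inS (R : realType) (m : nat) (P : 'M[R]_m) (th : 'cV[R]_m) : Prop :=
  P = P^T /\ P *m P = P /\ P *m th = 0.

Definition loss (R : realType) (m : nat) (P1 : 'M[R]_m) (t1 : 'cV[R]_m)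
  (P2 : 'M[R]_m) (t2 : 'cV[R]_m) : R :=
  frob2 (P1 - P2) + frob2 (t1 - t2).

(* k - sum_{j=1}^k lambda_j  (lambda indexed from 0 in Rocq) *)
Definition kcost (R : realType) (m : nat) (lam : 'I_m -> R) (k : nat) : R :=
  k%:R - \sum_(j < m | (j < k)%N) lam j.

(* lambda_k > lambda_{k+1} (1-indexed), with conventions lambda_0 = +oo,
   lambda_{m+1} = -oo, i.e. vacuous for k = 0 and k = m *)
Definition gap_at (R : realType) (m : nat) (lam : 'I_m -> R) (k : nat) : Prop :=
  forall i j : 'I_m, (0 < k)%N -> (i : nat) = k.-1 -> (j : nat) = k -> lam j < lam i.

Definition projk (R : realType) (m : nat) (U : 'M[R]_m) (k : nat) : 'M[R]_m :=
  \sum_(j < m | (j < k)%N) (col j U *m (col j U)^T).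

From HB Require Import structures.
From mathcomp Require Import all_boot all_order all_algebra.
From mathcomp Require Import all_classical all_reals all_analysis.
From mathcomp Require Import ring lra measurable_realfun.
Import Order.TTheory GRing.Theory Num.Theory.
Import numFieldNormedType.Exports.
Set Implicit Arguments. Unset Strict Implicit. Unset Printing Implicit Defensive.
Local Open Scope ring_scope.

(* Let U_1, ..., U_m be the orthonormal columns of U.  For (R, theta) in S_m the
   weights w_l = U_l' R U_l lie in [0, 1] because R is an orthogonal projector,
   and they sum to tr R = ||R||^2.  Expanding the squares and using R theta = 0,
   the expected loss is a constant plus
       sum_l w_l (1 - lambda_l) + ||theta - (I - R) theta_bar||^2.
   The second term vanishes exactly at theta = (I - R) theta_bar.  Minimality of
   k forces lambda_l >= 1 for l <= k and lambda_l <= 1 for l > k (strictly when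
   k is the unique minimizer), so the first term, a linear function of
   w in [0, 1]^m, is minimized by the indicator of {1, ..., k}, i.e. by R =
   sum_(j <= k) U_j U_j'; a projector is determined by its weights when these
   are all 0 or 1.  Conversely two minimizing k give minimizers of different
   traces, and a unique k already forces lambda_k > 1 > lambda_(k+1). *)

Section BoxMinimum.
Variables (R : realDomainType) (I : finType) (P : pred I) (w c : I -> R).
Hypotheses (w_ge0 : forall l, 0 <= w l) (w_le1 : forall l, w l <= 1).

Lemma sum_box_ge :
  (forall l, P l -> c l <= 0) -> (forall l, ~~ P l -> 0 <= c l) ->
  \sum_(l | P l) c l <= \sum_l w l * c l.
Proof.
move=> cP cNP; rewrite big_mkcond /=; apply: ler_sum => l _.
case: ifP => [/cP|/negbT/cNP] hc; have := w_ge0 l; have := w_le1 l; nra.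
Qed.

Lemma sum_box_eq :
  (forall l, P l -> c l < 0) -> (forall l, ~~ P l -> 0 < c l) ->
  \sum_l w l * c l = \sum_(l | P l) c l -> forall l, w l = (P l)%:R.
Proof.
move=> cP cNP heq l.
pose gap l := w l * c l - (if P l then c l else 0).
have gap_ge0 l' : 0 <= gap l'.
  rewrite /gap; case: ifP => [/cP|/negbT/cNP] hc;
    have := w_ge0 l'; have := w_le1 l'; nra.
have /eqP : gap l = 0.
  apply: (psumr_eq0P (P := predT) (fun l _ => gap_ge0 l)) => //.
  by rewrite sumrB heq big_mkcond subrr.
rewrite /gap; case: ifP => [/cP|/negbT/cNP] hc.
  by rewrite -{2}[c l]mul1r -mulrBl mulf_eq0 subr_eq0 (lt_eqF hc) orbF => /eqP.
by rewrite subr0 mulf_eq0 (gt_eqF hc) orbF => /eqP.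
Qed.

End BoxMinimum.

Lemma sqr_le_sumsqr (R : realDomainType) (I : finType) (F : I -> R) (j : I) :
  F j ^+ 2 <= \sum_l F l ^+ 2.
Proof. by rewrite (bigD1 j) //= lerDl; apply: sumr_ge0 => l _; apply: sqr_ge0. Qed.

Lemma sumsqr_eq0 (R : realDomainType) (I : finType) (F : I -> R) :
  \sum_l F l ^+ 2 = 0 -> forall l, F l = 0.
Proof.
move=> h l; have := psumr_eq0P (P := predT) (fun j _ => sqr_ge0 (F j)) h (i := l).
by move=> /(_ isT) /eqP; rewrite sqrf_eq0 => /eqP.
Qed.

Definition frobdot (R : realType) (p q : nat) (A B : 'M[R]_(p, q)) : R :=
  \tr (A *m B^T).

Section Frobenius.
Variables (R : realType) (p q : nat).
Implicit Types A B C : 'M[R]_(p, q).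

Lemma frobdotE A B : frobdot A B = \sum_i \sum_j A i j * B i j.
Proof. by apply: eq_bigr => i _; rewrite !mxE; apply: eq_bigr => j _; rewrite !mxE. Qed.

Lemma frob2E A : frob2 A = \sum_i \sum_j A i j ^+ 2.
Proof.
by rewrite [LHS]frobdotE; apply: eq_bigr => i _; apply: eq_bigr => j _; rewrite expr2.
Qed.

Lemma frob20 : frob2 (0 : 'M[R]_(p, q)) = 0.
Proof. by rewrite /frob2 mul0mx mxtrace0. Qed.

Lemma frob2_ge0 A : 0 <= frob2 A.
Proof. by rewrite frob2E; apply: sumr_ge0 => i _; apply: sumr_ge0 => j _; apply: sqr_ge0. Qed.

Lemma frob2_eq0 A : frob2 A = 0 -> A = 0.
Proof.
rewrite frob2E => h; apply/matrixP => i j; rewrite mxE.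
have row_ge0 i' : 0 <= \sum_j A i' j ^+ 2 by apply: sumr_ge0 => j' _; apply: sqr_ge0.
have row_i := psumr_eq0P (P := predT) (fun i' _ => row_ge0 i') h (i := i) isT.
exact: (sumsqr_eq0 (F := fun j => A i j) row_i j).
Qed.

Lemma entry_sqr_le_frob2 A i j : A i j ^+ 2 <= frob2 A.
Proof.
rewrite frob2E; apply: le_trans (sqr_le_sumsqr (fun l => A i l) j) _.
by rewrite (bigD1 i) //= lerDl; apply: sumr_ge0 => l _; apply: sumr_ge0 => l' _; apply: sqr_ge0.
Qed.

Lemma frob2B A B : frob2 (A - B) = frob2 A + frob2 B - 2 * frobdot A B.
Proof.
rewrite !frob2E frobdotE mulr_sumr -big_split -sumrB /=; apply: eq_bigr => i _.
by rewrite mulr_sumr -big_split -sumrB /=; apply: eq_bigr => j _; rewrite !mxE; ring.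
Qed.

Lemma frobdotBZr A B C a : frobdot A (a *: B - C) = a * frobdot A B - frobdot A C.
Proof.
rewrite !frobdotE mulr_sumr -sumrB; apply: eq_bigr => i _.
by rewrite mulr_sumr -sumrB; apply: eq_bigr => j _; rewrite !mxE; ring.
Qed.

End Frobenius.

Section Projector.
Variables (R : realType) (m : nat).
Implicit Types S U X : 'M[R]_m.

Definition rayleigh U X (l : 'I_m) : R := (U^T *m X *m U) l l.

Lemma proj_compl S : S^T = S -> S *m S = S ->
  (1%:M - S)^T = 1%:M - S /\ (1%:M - S) *m (1%:M - S) = 1%:M - S.
Proof.
move=> hT hI; split; first by rewrite linearB /= tr_scalar_mx hT.
by rewrite mulmxBl !mulmxBr !mul1mx !mulmx1 hI subrr subr0.
Qed.

Lemma frob2_proj S : S^T = S -> S *m S = S -> frob2 S = \tr S.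
Proof. by move=> hT hI; rewrite /frob2 hT hI. Qed.

Lemma proj_diagE S i : S^T = S -> S *m S = S -> S i i = \sum_l S i l ^+ 2.
Proof.
move=> hT hI; rewrite -{1}hI mxE; apply: eq_bigr => l _.
by rewrite -{2}hT mxE expr2.
Qed.

Lemma proj_entry_sqr_le1 S i j : S^T = S -> S *m S = S -> S i j ^+ 2 <= 1.
Proof.
move=> hT hI; have hd := proj_diagE i hT hI.
have := sqr_le_sumsqr (fun l => S i l) j; have := sqr_le_sumsqr (fun l => S i l) i.
rewrite /= -hd; nra.
Qed.

Lemma rayleigh_projE U S l : S^T = S -> S *m S = S ->
  rayleigh U S l = \sum_i ((S *m U) i l) ^+ 2.
Proof.
move=> hT hI; rewrite /rayleigh; have -> : U^T *m S *m U = (S *m U)^T *m (S *m U).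
  by rewrite trmx_mul hT mulmxA -(mulmxA _ S S) hI.
by rewrite mxE; apply: eq_bigr => i _; rewrite !mxE expr2.
Qed.

Lemma rayleigh_proj_ge0 U S l : S^T = S -> S *m S = S -> 0 <= rayleigh U S l.
Proof.
by move=> hT hI; rewrite rayleigh_projE //; apply: sumr_ge0 => i _; apply: sqr_ge0.
Qed.

Lemma trmx_conj_diag U (d : 'rV[R]_m) :
  (U *m diag_mx d *m U^T)^T = U *m diag_mx d *m U^T.
Proof. by rewrite !trmx_mul trmxK tr_diag_mx mulmxA. Qed.

Lemma sum_rank1_diagE U (d : 'I_m -> R) :
  \sum_(j < m) d j *: (col j U *m (col j U)^T) = U *m diag_mx (\row_j d j) *m U^T.
Proof.
apply/matrixP => a b; rewrite summxE !mxE; apply: eq_bigr => j _.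
by rewrite mul_mx_diag !mxE big_ord1 !mxE; ring.
Qed.

Lemma projkE U k : projk U k = U *m diag_mx (\row_j ((j < k)%N%:R : R)) *m U^T.
Proof.
rewrite -sum_rank1_diagE /projk [RHS](bigID (fun j : 'I_m => (j < k)%N)) /=.
rewrite [X in _ = _ + X]big1 ?addr0; last by move=> j /negbTE ->; rewrite scale0r.
by apply: eq_bigr => j ->; rewrite scale1r.
Qed.

Lemma frobdot_conj_diag U X (d : 'rV[R]_m) :
  frobdot X (U *m diag_mx d *m U^T) = \sum_l rayleigh U X l * d 0 l.
Proof.
rewrite /frobdot trmx_conj_diag !mulmxA mxtrace_mulC !mulmxA mul_mx_diag.
by apply: eq_bigr => l _; rewrite mxE.
Qed.

Section Orthonormal.
Variable U : 'M[R]_m.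
Hypothesis U_orthonormal : U^T *m U = 1%:M.

Lemma mxtrace_rayleigh X : \tr X = \sum_l rayleigh U X l.
Proof.
transitivity (\tr (X *m (U *m U^T))); first by rewrite (mulmx1C U_orthonormal) mulmx1.
by rewrite mulmxA mxtrace_mulC mulmxA.
Qed.

Lemma rayleigh_compl X l : rayleigh U (1%:M - X) l = 1 - rayleigh U X l.
Proof. by rewrite /rayleigh mulmxBr mulmx1 mulmxBl U_orthonormal !mxE eqxx mulr1n. Qed.

Lemma rayleigh_proj_le1 S l : S^T = S -> S *m S = S -> rayleigh U S l <= 1.
Proof.
move=> hT hI; rewrite -subr_ge0 -rayleigh_compl.
by have [hT' hI'] := proj_compl hT hI; apply: rayleigh_proj_ge0.
Qed.

Lemma mxtrace_sub_frobdot_spectral X (lam : 'I_m -> R) :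
  \tr X - frobdot X (U *m diag_mx (\row_j lam j) *m U^T)
  = \sum_l rayleigh U X l * (1 - lam l).
Proof.
rewrite mxtrace_rayleigh frobdot_conj_diag -sumrB; apply: eq_bigr => l _.
by rewrite mxE; ring.
Qed.

Lemma rayleigh_projk k l : rayleigh U (projk U k) l = (l < k)%N%:R.
Proof.
rewrite /rayleigh projkE !mulmxA U_orthonormal mul1mx -mulmxA U_orthonormal mulmx1.
by rewrite !mxE eqxx mulr1n.
Qed.

Lemma mxtrace_projk k : (k <= m)%N -> \tr (projk U k) = k%:R.
Proof.
move=> hk; rewrite mxtrace_rayleigh.
transitivity (\sum_(l < m | (l < k)%N) (1 : R)).
  by rewrite [RHS]big_mkcond; apply: eq_bigr => l _; rewrite rayleigh_projk; case: (l < k)%N.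
by rewrite (big_ord_narrow hk) sumr_const card_ord.
Qed.

Lemma projk_idem k : projk U k *m projk U k = projk U k.
Proof.
rewrite projkE -!mulmxA (mulmxA U^T U) U_orthonormal mul1mx (mulmxA (diag_mx _)).
rewrite mulmx_diag; congr (_ *m (diag_mx _ *m _)); apply/rowP => j; rewrite !mxE.
by case: (j < k)%N; rewrite ?mulr1 ?mulr0.
Qed.

Lemma projk_inS k (v : 'cV[R]_m) : inS (projk U k) ((1%:M - projk U k) *m v).
Proof.
split; first by rewrite projkE trmx_conj_diag.
split; first exact: projk_idem.
by rewrite mulmxA mulmxBr mulmx1 projk_idem subrr mul0mx.
Qed.

Lemma proj_eq_projk S k : S^T = S -> S *m S = S ->
  (forall l, rayleigh U S l = (l < k)%N%:R) -> S = projk U k.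
Proof.
move=> hT hI hw; rewrite projkE.
have SU : S *m U = U *m diag_mx (\row_j ((j < k)%N%:R : R)).
  apply/matrixP => i l; rewrite mul_mx_diag !mxE.
  case: (ltnP l k) => hl.
    have [hT' hI'] := proj_compl hT hI.
    have /eqP := rayleigh_compl S l; rewrite hw hl subrr rayleigh_projE // => /eqP e.
    have := sumsqr_eq0 e i; rewrite mulmxBl mul1mx !mxE => /eqP.
    by rewrite mulr1 subr_eq0 => /eqP.
  have /eqP := hw l; rewrite ltnNge hl mulr0n rayleigh_projE // => /eqP e.
  by have := sumsqr_eq0 e i; rewrite mxE => ->; rewrite mulr0.
by rewrite -[LHS]mulmx1 -(mulmx1C U_orthonormal) mulmxA SU.
Qed.

End Orthonormal.

Lemma inS_loss_completed_square (Rm Rbar : 'M[R]_m) (th thbar : 'cV[R]_m) :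
  inS Rm th ->
  frob2 Rm + frob2 th - 2 * (frobdot Rm Rbar + frobdot th thbar)
  = \tr Rm - frobdot Rm (2 *: Rbar - thbar *m thbar^T)
    + frob2 (th - (1%:M - Rm) *m thbar) - frob2 thbar.
Proof.
move=> [/esym hT [hI Rth0]].
have [hT' hI'] := proj_compl hT hI.
have cross : frobdot th ((1%:M - Rm) *m thbar) = frobdot th thbar.
  rewrite mulmxBl mul1mx -[X in X - _]scale1r frobdotBZr mul1r.
  rewrite [X in _ - X]/frobdot trmx_mul hT mulmxA mxtrace_mulC mulmxA Rth0.
  by rewrite mul0mx mxtrace0 subr0.
have proj_sq : frob2 ((1%:M - Rm) *m thbar) = frob2 thbar - frobdot Rm (thbar *m thbar^T).
  rewrite /frob2 /frobdot [in RHS]trmx_mul trmxK trmx_mul hT' mulmxA mxtrace_mulC.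
  by rewrite !mulmxA hI' !mulmxBl mul1mx raddfB.
rewrite frobdotBZr frob2B cross proj_sq frob2_proj //; ring.
Qed.

End Projector.

Section Kcost.
Variables (R : realType) (m : nat) (lam : 'I_m -> R).

Lemma kcostE k : (k <= m)%N -> kcost lam k = \sum_(l < m | (l < k)%N) (1 - lam l).
Proof. by move=> hk; rewrite /kcost sumrB [in RHS](big_ord_narrow hk) sumr_const card_ord. Qed.

Lemma kcostS k (hk : (k < m)%N) : kcost lam k.+1 = kcost lam k + (1 - lam (Ordinal hk)).
Proof.
rewrite !kcostE ?(ltnW hk) // (bigD1 (Ordinal hk)) //= addrC; congr (_ + _).
by apply: eq_bigl => l; rewrite ltnS leq_eqVlt -val_eqE /=; case: eqP => [->|_];
  rewrite ?ltnn ?andbT.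
Qed.

Lemma kcostS_lam1 k (hk : (k < m)%N) : lam (Ordinal hk) = 1 -> kcost lam k.+1 = kcost lam k.
Proof. by move=> h1; rewrite kcostS h1 subrr addr0. Qed.

Section Minimizer.
Variable k : nat.
Hypothesis lam_sorted : forall i j : 'I_m, (i <= j)%N -> lam j <= lam i.
Hypothesis k_le_m : (k <= m)%N.
Hypothesis k_min : forall k', (k' <= m)%N -> kcost lam k <= kcost lam k'.

Lemma kcost_min_lam_ge1 (l : 'I_m) : (l < k)%N -> 1 <= lam l.
Proof.
case: k k_le_m k_min => // k' hk hmin hl.
have := hmin k' (ltnW hk); rewrite kcostS => hstep.
have := @lam_sorted l (Ordinal hk) hl; lra.
Qed.

Lemma kcost_min_lam_le1 (l : 'I_m) : (k <= l)%N -> lam l <= 1.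
Proof.
move=> hl; have hk : (k < m)%N := leq_ltn_trans hl (ltn_ord l).
have := k_min hk; rewrite kcostS => hstep.
have := @lam_sorted (Ordinal hk) l hl; lra.
Qed.

Hypothesis k_unique : forall k', (k' <= m)%N -> kcost lam k' = kcost lam k -> k' = k.

Lemma kcost_umin_lam_gt1 (l : 'I_m) : (l < k)%N -> 1 < lam l.
Proof.
move=> hl; have k_gt0 : (0 < k)%N := leq_ltn_trans (leq0n l) hl.
have hk : (k.-1 < m)%N by rewrite prednK.
have hneq1 : lam (Ordinal hk) != 1.
  apply/eqP => h1; have e : k.-1 = k.
    by apply: k_unique (ltnW hk) _; rewrite -[in RHS](prednK k_gt0) (kcostS_lam1 h1).
  by move: k_gt0; rewrite -ltn_predL e ltnn.
have hpred : (k.-1 < k)%N by rewrite ltn_predL.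
have hge1 := kcost_min_lam_ge1 (l := Ordinal hk) hpred.
have hgt1 : 1 < lam (Ordinal hk) by rewrite lt_neqAle eq_sym hneq1.
have hl' : (l <= k.-1)%N by rewrite -ltnS prednK.
have := @lam_sorted l (Ordinal hk) hl'; lra.
Qed.

Lemma kcost_umin_lam_lt1 (l : 'I_m) : (k <= l)%N -> lam l < 1.
Proof.
move=> hl; have hk : (k < m)%N := leq_ltn_trans hl (ltn_ord l).
have hneq1 : lam (Ordinal hk) != 1.
  apply/eqP => h1; apply: (@n_Sn k); apply/esym/k_unique => //.
  exact: kcostS_lam1 h1.
have hle1 := kcost_min_lam_le1 (l := Ordinal hk) (leqnn k).
have hlt1 : lam (Ordinal hk) < 1 by rewrite lt_neqAle hneq1.
have := @lam_sorted (Ordinal hk) l hl; lra.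
Qed.

Lemma kcost_umin_gap : gap_at lam k.
Proof.
move=> i j k_gt0 hi hj.
have hik : (i < k)%N by rewrite hi ltn_predL.
have lt1 := kcost_umin_lam_lt1 (l := j) (eq_leq (esym hj)).
have gt1 := kcost_umin_lam_gt1 (l := i) hik.
exact: lt_trans lt1 gt1.
Qed.

End Minimizer.
End Kcost.

Section SpectralCost.
Variables (R : realType) (m : nat) (lam : 'I_m -> R) (U : 'M[R]_m) (k : nat).
Hypothesis U_orthonormal : U^T *m U = 1%:M.
Hypothesis lam_sorted : forall i j : 'I_m, (i <= j)%N -> lam j <= lam i.
Hypothesis k_le_m : (k <= m)%N.
Hypothesis k_min : forall k', (k' <= m)%N -> kcost lam k <= kcost lam k'.

Lemma spectral_cost_ge S : S^T = S -> S *m S = S ->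
  kcost lam k <= \sum_l rayleigh U S l * (1 - lam l).
Proof.
move=> hT hI; rewrite kcostE //.
apply: (sum_box_ge (P := fun l : 'I_m => (l < k)%N) (c := fun l => 1 - lam l)).
- by move=> l; apply: rayleigh_proj_ge0.
- by move=> l; apply: rayleigh_proj_le1.
- by move=> l /(kcost_min_lam_ge1 lam_sorted k_le_m k_min); rewrite subr_le0.
- by move=> l; rewrite -leqNgt => /(kcost_min_lam_le1 lam_sorted k_min); rewrite subr_ge0.
Qed.

Hypothesis k_unique : forall k', (k' <= m)%N -> kcost lam k' = kcost lam k -> k' = k.

Lemma spectral_cost_eq S : S^T = S -> S *m S = S ->
  \sum_l rayleigh U S l * (1 - lam l) = kcost lam k -> S = projk U k.
Proof.
move=> hT hI heq; apply: proj_eq_projk => //.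
apply: (sum_box_eq (P := fun l : 'I_m => (l < k)%N) (c := fun l => 1 - lam l)).
- by move=> l; apply: rayleigh_proj_ge0.
- by move=> l; apply: rayleigh_proj_le1.
- by move=> l /(kcost_umin_lam_gt1 lam_sorted k_le_m k_min k_unique); rewrite subr_lt0.
- move=> l; rewrite -leqNgt => /(kcost_umin_lam_lt1 lam_sorted k_min k_unique).
  by rewrite subr_gt0.
- by rewrite heq kcostE.
Qed.

End SpectralCost.

Section Integral.
Variables (d : measure_display) (T : measurableType d) (R : realType).
Variable P : probability T R.

Definition has_integral (g : T -> R) (v : R) : Prop :=
  P.-integrable setT (EFin \o g) /\ \int[P]_(t in setT) g t = v.

Lemma has_integral_cst c : has_integral (fun=> c) c.
Proof.
split; first exact: finite_measure_integrable_cst.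
rewrite Rintegral_cst // (_ : fine _ = 1) ?mulr1 //.
exact: (congr1 fine (probability_setT P)).
Qed.

Lemma has_integralD f g a b :
  has_integral f a -> has_integral g b -> has_integral (fun t => f t + g t) (a + b).
Proof.
move=> [fi <-] [gi <-]; split; last by rewrite RintegralD.
exact: eq_integrable (integrableD measurableT fi gi).
Qed.

Lemma has_integralZl f a c : has_integral f a -> has_integral (fun t => c * f t) (c * a).
Proof.
move=> [fi <-]; split; last by rewrite RintegralZl.
exact: eq_integrable (integrableZl measurableT c fi).
Qed.

Lemma has_integralB f g a b :
  has_integral f a -> has_integral g b -> has_integral (fun t => f t - g t) (a - b).
Proof.
move=> hf /(has_integralZl (-1)); rewrite mulN1r => hg.
by have := has_integralD hf hg; under eq_fun do rewrite mulN1r.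
Qed.

Lemma has_integral_sum (I : Type) (s : seq I) (G : I -> T -> R) (v : I -> R) :
  (forall i, has_integral (G i) (v i)) ->
  has_integral (fun t => \sum_(i <- s) G i t) (\sum_(i <- s) v i).
Proof.
move=> hG; elim: s => [|i s ih].
  by rewrite big_nil; under eq_fun do rewrite big_nil; apply: has_integral_cst.
by rewrite big_cons; under eq_fun do rewrite big_cons; apply: has_integralD.
Qed.

Lemma has_integral_dominated (g h : T -> R) v :
  measurable_fun setT g -> has_integral h v -> (forall t, `|g t| <= h t) ->
  has_integral g (\int[P]_(t in setT) g t).
Proof.
move=> g_mes [hi _] gh; split => //; apply: (le_integrable measurableT _ _ hi).
- exact/measurable_EFinP.
- by move=> t _ /=; rewrite ?abse_EFin lee_fin (le_trans (gh t)) ?ler_norm.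
Qed.

Lemma integrable_has_integral g :
  P.-integrable setT (EFin \o g) -> has_integral g (\int[P]_(t in setT) g t).
Proof. by []. Qed.

Lemma integral_EFin g v : has_integral g v -> (\int[P]_(t in setT) (g t)%:E)%E = v%:E.
Proof. by move=> [gi <-]; rewrite /Rintegral fineK //; apply: integrable_fin_num. Qed.

End Integral.

Lemma ler_norm_1Dsqr (R : realDomainType) (x : R) : `|x| <= 1 + x ^+ 2.
Proof. by case: (lerP 0 x) => h; [rewrite ger0_norm | rewrite ltr0_norm]; nra. Qed.

Section ExpectedLoss.
Variables (d : measure_display) (T : measurableType d) (R : realType).
Variables (P : probability T R) (m : nat) (R2 : T -> 'M[R]_m) (th2 : T -> 'cV[R]_m).
Hypothesis R2th2_inS : forall t, inS (R2 t) (th2 t).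
Hypothesis R2_measurable : forall i j, measurable_fun setT (fun t => R2 t i j).
Hypothesis th2_measurable : forall i j, measurable_fun setT (fun t => th2 t i j).
Hypothesis th2_sqr_integrable : P.-integrable setT (fun t => (frob2 (th2 t))%:E).

Local Notation Rbar := (\matrix_(i, j) (\int[P]_(t in setT) R2 t i j) : 'M[R]_m).
Local Notation thbar := (\matrix_(i, j) (\int[P]_(t in setT) th2 t i j) : 'cV[R]_m).
Local Notation Eloss Rm th := (\int[P]_(t in setT) (loss Rm th (R2 t) (th2 t))%:E)%E.
Local Notation Esq := (\int[P]_(t in setT) (\tr (R2 t) + frob2 (th2 t))).

Lemma R2_has_integral i j :
  has_integral P (fun t => R2 t i j) (\int[P]_(t in setT) R2 t i j).
Proof.
apply: has_integral_dominated (R2_measurable i j) (has_integral_cst P 2) _ => t.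
have [/esym hT [hI _]] := R2th2_inS t.
have := ler_norm_1Dsqr (R2 t i j); have := proj_entry_sqr_le1 i j hT hI; lra.
Qed.

Lemma th2_has_integral i j :
  has_integral P (fun t => th2 t i j) (\int[P]_(t in setT) th2 t i j).
Proof.
have th2_sqr := integrable_has_integral th2_sqr_integrable.
apply: has_integral_dominated (th2_measurable i j)
  (has_integralD (has_integral_cst P 1) th2_sqr) _ => t.
have := ler_norm_1Dsqr (th2 t i j); have := entry_sqr_le_frob2 (th2 t) i j; lra.
Qed.

Lemma expected_lossE Rm th :
  Eloss Rm th = (frob2 Rm + frob2 th + Esq - 2 * (frobdot Rm Rbar + frobdot th thbar))%:E.
Proof.
have Esq_has_integral : has_integral P (fun t => \tr (R2 t) + frob2 (th2 t)) Esq.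
  have [Esq_integrable _] := has_integralD
    (has_integral_sum (index_enum 'I_m) (fun i => R2_has_integral i i))
    (integrable_has_integral th2_sqr_integrable).
  exact: integrable_has_integral Esq_integrable.
rewrite (eq_integral (fun t => (frob2 Rm + frob2 th + (\tr (R2 t) + frob2 (th2 t))
     - 2 * (\sum_i \sum_j Rm i j * R2 t i j + \sum_i \sum_j th i j * th2 t i j))%:E)).
  apply: integral_EFin; apply: has_integralB.
    exact: has_integralD (has_integral_cst _ _) Esq_has_integral.
  apply: has_integralZl; rewrite !frobdotE; apply: has_integralD;
    apply: has_integral_sum => i; apply: has_integral_sum => j; rewrite mxE;
    apply: has_integralZl; [exact: R2_has_integral | exact: th2_has_integral].
move=> t _; congr EFin; have [/esym hT [hI _]] := R2th2_inS t.
by rewrite /loss !frob2B !frobdotE (frob2_proj hT hI) /mxtrace; ring.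
Qed.

Variables (lam : 'I_m -> R) (U : 'M[R]_m).
Hypothesis U_orthonormal : U^T *m U = 1%:M.
Hypothesis spectral_decomposition :
  2 *: Rbar - thbar *m thbar^T = \sum_(j < m) lam j *: (col j U *m (col j U)^T).

Lemma expected_loss_inS Rm th : inS Rm th ->
  Eloss Rm th = (Esq - frob2 thbar + \sum_l rayleigh U Rm l * (1 - lam l)
                 + frob2 (th - (1%:M - Rm) *m thbar))%:E.
Proof.
move=> hin; rewrite expected_lossE; congr EFin.
have := inS_loss_completed_square Rbar thbar hin.
rewrite spectral_decomposition sum_rank1_diagE mxtrace_sub_frobdot_spectral //; lra.
Qed.

Lemma expected_loss_projk k : (k <= m)%N ->
  Eloss (projk U k) ((1%:M - projk U k) *m thbar) = (Esq - frob2 thbar + kcost lam k)%:E.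
Proof.
move=> hk; rewrite expected_loss_inS; last exact: projk_inS.
rewrite [_ *m _ - _]subrr frob20 addr0 kcostE // [in RHS]big_mkcond /=; congr (_ + _)%:E; apply: eq_bigr => l _.
by rewrite rayleigh_projk //; case: (l < k)%N; rewrite /= ?mul1r ?mul0r.
Qed.

End ExpectedLoss.

Theorem theorem3 (R : realType) (m : nat)
  (d : measure_display) (T : measurableType d) (P : probability T R)
  (R2 : T -> 'M[R]_m) (th2 : T -> 'cV[R]_m)
  (hS : forall t, inS (R2 t) (th2 t))
  (hR2 : forall i j, measurable_fun setT (fun t => R2 t i j))
  (hth2 : forall i j, measurable_fun setT (fun t => th2 t i j))
  (hint : P.-integrable setT (fun t => (frob2 (th2 t))%:E))
  (lam : 'I_m -> R) (U : 'M[R]_m)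
  (hsorted : forall i j : 'I_m, (i <= j)%N -> lam j <= lam i)
  (horth : U^T *m U = 1%:M)
  (hdec : let Rbar := \matrix_(i, j) (\int[P]_(t in setT) R2 t i j) in
          let thbar := \matrix_(i, j) (\int[P]_(t in setT) th2 t i j) in
          2 *: Rbar - thbar *m thbar^T
            = \sum_(j < m) lam j *: (col j U *m (col j U)^T))
  (k : nat) (hk : (k <= m)%N)
  (hkmin : forall k' : nat, (k' <= m)%N -> kcost lam k <= kcost lam k') :
  let thbar := \matrix_(i, j) (\int[P]_(t in setT) th2 t i j) : 'cV[R]_m in
  let f := fun (Rm : 'M[R]_m) (th : 'cV[R]_m) =>
             (\int[P]_(t in setT) (loss Rm th (R2 t) (th2 t))%:E)%E in
  let Rs := projk U k in
  let ths := (1%:M - Rs) *m thbar in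
  [/\ inS Rs ths,
      (forall (Rm : 'M[R]_m) (th : 'cV[R]_m), inS Rm th -> (f Rs ths <= f Rm th)%E)
    & ((forall (Rm : 'M[R]_m) (th : 'cV[R]_m), inS Rm th ->
          f Rm th = f Rs ths -> Rm = Rs /\ th = ths)
       <-> ((forall k' : nat, (k' <= m)%N -> kcost lam k' = kcost lam k -> k' = k)
            /\ gap_at lam k))].
Proof.
move=> thbar f Rs ths.
have f_inS := expected_loss_inS hS hR2 hth2 hint horth hdec.
have f_projk := expected_loss_projk hS hR2 hth2 hint horth hdec.
have cost_ge := spectral_cost_ge horth hsorted hk hkmin.
split; first exact: projk_inS.
  move=> Rm th hin; rewrite /f f_projk // f_inS // lee_fin.
  have [/esym hT [hI _]] := hin.
  have := cost_ge _ hT hI; have := frob2_ge0 (th - (1%:M - Rm) *m thbar); lra.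
split=> [f_umin | [k_unique _] Rm th hin].
  have k_unique k' : (k' <= m)%N -> kcost lam k' = kcost lam k -> k' = k.
    move=> hk' hcost.
    have hf : f (projk U k') ((1%:M - projk U k') *m thbar) = f Rs ths.
      by rewrite /f !f_projk // hcost.
    have [eR _] := f_umin _ _ (projk_inS horth k' thbar) hf.
    by apply/eqP; rewrite -(eqr_nat R) -(mxtrace_projk horth hk') eR mxtrace_projk.
  by split=> //; apply: (kcost_umin_gap hsorted hk hkmin k_unique).
rewrite /f f_inS // f_projk // => -[heq].
have [/esym hT [hI _]] := hin.
have cost_le := cost_ge _ hT hI.
have sq_ge0 := frob2_ge0 (th - (1%:M - Rm) *m thbar).
have eR : Rm = Rs by apply: (spectral_cost_eq horth hsorted hk hkmin k_unique hT hI); lra.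
have /frob2_eq0/eqP : frob2 (th - (1%:M - Rm) *m thbar) = 0 by lra.
by rewrite subr_eq0 eR => /eqP.
Qed.
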